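(* On $\mathcal M_{\mathcal G,\Gamma}$ the metric $$\mathrm w_{\mathcal G,\Gamma}(T,S)=\mathrm a_{\mathcal G}(T,S)+\sup_{g\in\Gamma}\mathrm a(T^g,S^g)$$ induces the same topology as the metric $\mathrm m_{\mathcal G,\Gamma}$ (the leash topology).
   Context: $(X,\Sigma,\mu)$ is a separable Lebesgue space with a non-atomic probability measure $\mu$. $\mathcal A$ is the group of invertible measure-preserving transformations of $X$, two transformations being identified if they agree outside a null set. Fix a countable family $\{A_i\}_{i\in\mathbb N}\subset\Sigma$ that generates $\Sigma$ and is dense in $\Sigma$ (for every $A\in\Sigma$ and $\varepsilon>0$ there is $i$ with $\mu(A_i\triangle A)<\varepsilon$). For $T,S\in\mathcal A$ put $\mathrm d(T,S)=\sum_{i}2^{-i}\big(\mu(TA_i\triangle SA_i)+\mu(T^{-1}A_i\triangle S^{-1}A_i)\big)$ and $\mathrm a(T,S)=\sum_{i,j}2^{-(i+j)}|\mu(TA_i\cap A_j)-\mu(SA_i\cap A_j)|$. $\mathcal G$ is a Hausdorff locally compact group with a countable neighborhood base. Fix an at most countable family $\{K_i\}$ of compact subsets of $\mathcal G$ with nonempty interiors whose union contains a set generating $\mathcal G$. An action of $\mathcal G$ is a family $T=\{T^g\}_{g\in\mathcal G}\subset\mathcal A$ with $T^gT^h=T^{gh}$ for all $g,h$ and such that $g\mapsto\mu(T^gA\cap B)$ is continuous for all $A,B\in\Sigma$. For actions $T,S$: $\mathrm d_{\mathcal G}(T,S)=\sum_i 2^{-i}\sup_{g\in K_i}\mathrm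 d(T^g,S^g)$ and $\mathrm a_{\mathcal G}(T,S)=\sum_i 2^{-i}\sup_{g\in K_i}\mathrm a(T^g,S^g)$. Let $\Gamma\subset\mathcal G$ be an unbounded subset (not contained in any compact set). An action $T$ is $\Gamma$-mixing if for all $A,B\in\Sigma$ and $\varepsilon>0$ there is a compact $C\subset\mathcal G$ with $|\mu(T^gA\cap B)-\mu(A)\mu(B)|<\varepsilon$ for all $g\in\Gamma\setminus C$. $\mathcal M_{\mathcal G,\Gamma}$ is the set of all $\Gamma$-mixing actions with the leash metric $\mathrm m_{\mathcal G,\Gamma}(T,S)=\mathrm d_{\mathcal G}(T,S)+\sup_{g\in\Gamma}\mathrm a(T^g,S^g)$. *)

From HB Require Import structures.
From mathcomp Require Import all_boot all_order all_algebra.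
From mathcomp Require Import all_classical all_reals all_analysis.
Import Order.TTheory GRing.Theory Num.Theory.
Import numFieldNormedType.Exports.

Set Implicit Arguments.
Unset Strict Implicit.
Unset Printing Implicit Defensive.

Local Open Scope classical_set_scope.
Local Open Scope ring_scope.

Definition lc_group (G : topologicalType) (mul : G -> G -> G) (inv : G -> G)
    (one : G) : Prop :=
  [/\ (forall x y z, mul x (mul y z) = mul (mul x y) z) /\
      (forall x, mul one x = x /\ mul x one = x) /\
      (forall x, mul (inv x) x = one /\ mul x (inv x) = one),
      continuous (fun p : G * G => mul p.1 p.2) /\ continuous inv,
      hausdorff_space G,
      locally_compact [set: G] &
      (forall x : G, exists B : nat -> set G,
          (forall n, nbhs x (B n)) /\
          (forall U, nbhs x U -> exists n, B n `<=` U))].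

Definition is_subgroup (G : Type) (mul : G -> G -> G) (inv : G -> G) (one : G)
    (H : set G) : Prop :=
  H one /\ (forall x y, H x -> H y -> H (mul x (inv y))).

Definition generates (G : Type) (mul : G -> G -> G) (inv : G -> G) (one : G)
    (A : set G) : Prop :=
  forall H, is_subgroup mul inv one H -> A `<=` H -> H = [set: G].

Definition unbounded (G : topologicalType) (Gam : set G) : Prop :=
  ~ (exists C : set G, compact C /\ Gam `<=` C).

Definition nonatomic d (X : measurableType d) (R : realType)
    (mu : set X -> \bar R) : Prop :=
  forall A, measurable A -> (0 < mu A)%E ->
    exists B, [/\ measurable B, B `<=` A & (0 < mu B < mu A)%E].

(* (non-atomic) Lebesgue space: isomorphic mod 0 to [0,1] with Lebesgue
   measure (on Borel sets). *)
Definition nonatomic_lebesgue_space d (X : measurableType d) (R : realType)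
    (mu : set X -> \bar R) : Prop :=
  exists (X0 : set X) (Y0 : set R) (phi : X -> R) (psi : R -> X),
    [/\ measurable X0 /\ mu X0 = 1%E,
        measurable (Y0 : set (measurableTypeR R)) /\ Y0 `<=` `[0%R, 1%R] /\
          (@lebesgue_measure R) Y0 = 1%E,
        (forall x, X0 x -> Y0 (phi x) /\ psi (phi x) = x) /\
        (forall y, Y0 y -> X0 (psi y) /\ phi (psi y) = y),
        measurable_fun X0 (phi : X -> measurableTypeR R) /\
        measurable_fun (Y0 : set (measurableTypeR R)) psi &
        (forall B : set (measurableTypeR R), measurable B ->
           mu (X0 `&` phi @^-1` B) = (@lebesgue_measure R) (Y0 `&` B))].

(* Invertible measure-preserving transformations (representatives of the
   elements of the group 𝒜; elements of 𝒜 are identified mod null sets,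
   and all the quantities below only depend on the classes). *)
Definition inv_mpt d (X : measurableType d) (R : realType)
    (mu : set X -> \bar R) (T : X -> X) : Prop :=
  [/\ measurable_fun [set: X] T,
      (forall A, measurable A -> mu (T @^-1` A) = mu A) &
      exists Tinv : X -> X,
        [/\ cancel T Tinv, cancel Tinv T & measurable_fun [set: X] Tinv]].

Definition symdiff (X : Type) (A B : set X) : set X := (A `\` B) `|` (B `\` A).

Section Metrics.
Context d (X : measurableType d) (R : realType) (mu : set X -> \bar R).
Context (A : nat -> set X).
Local Open Scope ereal_scope.

Definition dist_d (T S : X -> X) : \bar R :=
  \sum_(i <oo) ((2 ^- i)%:E *
     (mu (symdiff (T @` A i) (S @` A i)) +
      mu (symdiff (T @^-1` A i) (S @^-1` A i)))).

Definition dist_a (T S : X -> X) : \bar R :=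
  \sum_(i <oo) \sum_(j <oo)
    ((2 ^- (i + j))%:E * `| mu (T @` A i `&` A j) - mu (S @` A i `&` A j) |).

Context (G : topologicalType) (mul : G -> G -> G) (I : set nat)
  (K : nat -> set G) (Gam : set G).

Definition is_action (T : G -> X -> X) : Prop :=
  [/\ forall g, inv_mpt mu (T g),
      forall g h, {ae mu, forall x, T g (T h x) = T (mul g h) x} &
      forall B C, measurable B -> measurable C ->
        continuous (fun g => fine (mu (T g @` B `&` C)))].

Definition Gam_mixing (T : G -> X -> X) : Prop :=
  forall B C, measurable B -> measurable C -> forall eps : R, (0 < eps)%R ->
    exists Cp : set G, compact Cp /\
      forall g, Gam g -> ~ Cp g ->
        `| mu (T g @` B `&` C) - mu B * mu C | < eps%:E.

Definition mixing_actions : set (G -> X -> X) :=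
  [set T | is_action T /\ Gam_mixing T].

Definition dist_dG (T S : G -> X -> X) : \bar R :=
  \sum_(i <oo | i \in I)
    ((2 ^- i)%:E * ereal_sup [set dist_d (T g) (S g) | g in K i]).

Definition dist_aG (T S : G -> X -> X) : \bar R :=
  \sum_(i <oo | i \in I)
    ((2 ^- i)%:E * ereal_sup [set dist_a (T g) (S g) | g in K i]).

Definition sup_a_Gam (T S : G -> X -> X) : \bar R :=
  ereal_sup [set dist_a (T g) (S g) | g in Gam].

Definition leash_m (T S : G -> X -> X) : \bar R := dist_dG T S + sup_a_Gam T S.

Definition metric_w (T S : G -> X -> X) : \bar R := dist_aG T S + sup_a_Gam T S.

End Metrics.

Definition metric_open (Y : Type) (R : realType) (M : set Y)
    (rho : Y -> Y -> \bar R) (U : set Y) : Prop :=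
  U `<=` M /\
  forall T, U T -> exists e : R, (0 < e)%R /\
    forall S, M S -> (rho T S < e%:E)%E -> U S.

From HB Require Import structures.
From mathcomp Require Import all_boot all_order all_algebra.
From mathcomp Require Import all_classical all_reals all_analysis.
From mathcomp Require Import lra.
Import Order.TTheory GRing.Theory Num.Theory.
Import numFieldNormedType.Exports.
Local Open Scope classical_set_scope.
Local Open Scope ring_scope.
Set Implicit Arguments. Unset Strict Implicit. Unset Printing Implicit Defensive.

(* Since |mu(T A_i ∩ A_j) - mu(S A_i ∩ A_j)| <= mu(T A_i Δ S A_i), we have a <= 2 d,
   hence w <= 2 m and the leash topology is finer.  Conversely, for a fixed Q, small
   a(Q, P) forces small d(Q, P): once Q A_i and Q^-1 A_i are approximated by members
   A_j of the dense family, the numbers mu(P A_i ∩ A_j) determine mu(Q A_i Δ P A_i)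
   up to a small error.  Continuity of g |-> a(T^g0, T^g) and compactness of the K_i
   make this uniform on each K_i, so small a_G(T, S) gives small d_G(T, S). *)


Section DyadicSeries.
Variable R : realType.

Lemma pow2N_gt0 (n : nat) : 0 < (2 : R) ^- n.
Proof. by rewrite invr_gt0 exprn_gt0. Qed.

Lemma pow2N_le (m n : nat) : (m <= n)%N -> (2 : R) ^- n <= 2 ^- m.
Proof.
by move=> mn; rewrite lef_pV2 ?posrE ?exprn_gt0// (ler_eXn2l (ltr1n R 2)).
Qed.

Lemma exists_pow2N_le (x : R) : 0 < x -> exists N : nat, 2 ^- N <= x.
Proof.
move=> x0; have [N _ /(_ N (leqnn N))] := near_infty_natSinv_expn_lt (PosNum x0).
by rewrite div1r => /ltW; exists N.
Qed.

Lemma sum_pow2N_le (m n : nat) : \sum_(m <= k < n) (2 : R) ^- k <= 2 * 2 ^- m.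
Proof.
have [mn|nm] := leqP m n; last first.
  by rewrite big_geq ?(ltnW nm)// mulr_ge0// ltW// pow2N_gt0.
rewrite -(subnKC mn) (eq_bigr (fun k => 2^-1 ^+ k)) => [|k _]; last by rewrite exprVn.
rewrite geometric_partial_tail.
apply: le_trans (geometric_le_lim _ _ _ _) _.
- by rewrite exprn_ge0// invr_ge0.
- by rewrite invr_gt0.
- by rewrite ger0_norm ?invf_lt1 ?ltr1n// invr_ge0.
- rewrite exprVn mulrC; apply: ler_wpM2r; first by rewrite invr_ge0 exprn_ge0.
  have -> : 1 - 2^-1 = 2^-1 :> R by rewrite {1}(splitr 1) div1r addrK.
  by rewrite invrK.
Qed.

Lemma exists_pos_lbound (N : nat) (f : nat -> R) : (forall i, 0 < f i) ->
  exists2 e, 0 < e & forall i, (i < N)%N -> e <= f i.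
Proof.
move=> f0; elim: N => [|N [e e0 he]]; first by exists 1.
exists (Num.min e (f N)); first by rewrite lt_min e0 f0.
move=> i; rewrite ltnS leq_eqVlt => /orP[/eqP ->|iN]; rewrite ge_min ?lexx ?orbT//.
by rewrite he.
Qed.

Local Open Scope ereal_scope.

Lemma pow2N_ge0 i : 0 <= ((2 : R) ^- i)%:E.
Proof. by rewrite lee_fin ltW// pow2N_gt0. Qed.

Lemma nneseries_term_le (f : nat -> \bar R) k : (forall i, 0 <= f i) ->
  f k <= \sum_(i <oo) f i.
Proof.
move=> f0; apply: le_trans (nneseries_lim_ge k.+1 _); last by move=> *; exact: f0.
by rewrite big_nat_recr//= leeDr// sume_ge0.
Qed.

Lemma dyadic_series_le (c e : R) (N : nat) (f : nat -> \bar R) :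
  (0 <= c)%R -> (0 <= e)%R -> (forall i, 0 <= f i) -> (forall i, f i <= c%:E) ->
  (forall i, (i < N)%N -> f i <= e%:E) ->
  \sum_(i <oo) ((2 ^- i)%:E * f i) <= (2 * e + 2 * c * 2 ^- N)%:E.
Proof.
move=> c0 e0 f0 fc fe.
have w0 i : 0 <= ((2 : R) ^- i)%:E by rewrite lee_fin ltW// pow2N_gt0.
have weighted_le (b : R) m n : (0 <= b)%R -> (forall i, (m <= i < n)%N -> f i <= b%:E) ->
    \sum_(m <= i < n) ((2 ^- i)%:E * f i) <= (2 * b * 2 ^- m)%:E.
  move=> b0 fb; apply: (@le_trans _ _ (\sum_(m <= i < n) ((2 ^- i) * b)%:E)).
    rewrite big_nat_cond [leRHS]big_nat_cond; apply: lee_sum => i /andP[mi _].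
    by rewrite EFinM lee_wpmul2l// fb.
  rewrite sumEFin lee_fin -mulr_suml mulrAC ler_wpM2r//; exact: sum_pow2N_le.
rewrite (nneseries_split 0 N) ?add0n => [|i]; last by rewrite mule_ge0.
rewrite EFinD; apply: leeD.
  have := weighted_le e 0%N N e0 (fun i hi => fe i (andP hi).2).
  by rewrite expr0 invr1 mulr1.
apply: lime_le; first by apply: is_cvg_nneseries => i _; rewrite mule_ge0.
by apply: nearW => n; exact: weighted_le.
Qed.

Lemma dyadic_series_le_const (c : R) (f : nat -> \bar R) :
  (forall i, 0 <= f i) -> (forall i, f i <= c%:E) ->
  \sum_(i <oo) ((2 ^- i)%:E * f i) <= (2 * c)%:E.
Proof.
move=> f0 fc; have c0 : (0 <= c)%R by rewrite -lee_fin (le_trans (f0 0%N)).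
have := @dyadic_series_le c 0 0 f c0 (lexx 0) f0 fc.
by rewrite mulr0 add0r expr0 invr1 mulr1; apply => i; rewrite ltn0.
Qed.

End DyadicSeries.

Lemma ereal_sup_image_ge0 (T : Type) (R : realType) (K : set T) (f : T -> \bar R) :
  K !=set0 -> (forall t, (0 <= f t)%E) -> (0 <= ereal_sup [set f t | t in K])%E.
Proof. by move=> [t Kt] f0; apply: le_trans (f0 t) _; apply: ereal_sup_ubound; exists t. Qed.

Lemma metric_open_compare (Y : Type) (R : realType) (M : set Y)
    (rho rho' : Y -> Y -> \bar R) (U : set Y) :
  (forall T, M T -> forall e : R, 0 < e -> exists2 dl : R, 0 < dl &
     forall S, M S -> (rho' T S < dl%:E)%E -> (rho T S < e%:E)%E) ->
  metric_open M rho U -> metric_open M rho' U.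
Proof.
move=> ctrl [UM hU]; split => // T UT; have [e [e0 he]] := hU T UT.
have [dl dl0 hdl] := ctrl T (UM T UT) e e0.
by exists dl; split => // S MS /(hdl S MS); exact: he.
Qed.

Lemma unbounded_neq0 (G : topologicalType) (Gam : set G) : unbounded Gam -> Gam !=set0.
Proof.
move=> Gam_unbdd; apply: contrapT => /set0P/negP/negbNE/eqP Gam0.
by apply: Gam_unbdd; exists set0; rewrite Gam0; split; [exact: compact0|].
Qed.

Lemma measurable_symdiff d (X : measurableType d) (B C : set X) :
  measurable B -> measurable C -> measurable (symdiff B C).
Proof. by move=> mB mC; apply: measurableU; apply: measurableD. Qed.

Section FiniteMeasure.
Context d (X : measurableType d) (R : realType).
Variable mu : {finite_measure set X -> \bar R}.
Local Notation pr B := (fine (mu B)).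

Lemma pr_measureE B : measurable B -> mu B = (pr B)%:E.
Proof. by move=> mB; rewrite fineK// fin_num_measure. Qed.

Lemma pr_ge0 B : 0 <= pr B.
Proof. exact/fine_ge0/measure_ge0. Qed.

Lemma le_pr B C : measurable B -> measurable C -> B `<=` C -> pr B <= pr C.
Proof. by move=> mB mC BC; rewrite -lee_fin -!pr_measureE// le_measure// inE. Qed.

Lemma pr_subadd B C D : measurable B -> measurable C -> measurable D ->
  B `<=` C `|` D -> pr B <= pr C + pr D.
Proof.
move=> mB mC mD BCD; have mCD : measurable (C `|` D) by exact: measurableU.
apply: le_trans (le_pr mB mCD BCD) _.
by rewrite -lee_fin EFinD -!pr_measureE// measureU2.
Qed.

Lemma pr_setD B C : measurable B -> measurable C -> pr (B `\` C) = pr B - pr (B `&` C).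
Proof.
move=> mB mC; have mBC : measurable (B `\` C) by exact: measurableD.
have mBIC : measurable (B `&` C) by exact: measurableI.
by apply: EFin_inj; rewrite EFinB -!pr_measureE// measureD// -ge0_fin_numE ?fin_num_measure.
Qed.

Lemma pr_setI_dist E F C : measurable E -> measurable F -> measurable C ->
  `|pr (E `&` C) - pr (F `&` C)| <= pr (symdiff E F).
Proof.
move=> mE mF mC; have mEF := measurable_symdiff mE mF.
have EC : pr (E `&` C) <= pr (F `&` C) + pr (symdiff E F).
  apply: pr_subadd => //; [exact: measurableI|exact: measurableI|].
  by move=> x [Ex Cx]; have [Fx|nFx] := pselect (F x); [left|right; left].
have FC : pr (F `&` C) <= pr (E `&` C) + pr (symdiff E F).
  apply: pr_subadd => //; [exact: measurableI|exact: measurableI|].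
  by move=> x [Fx Cx]; have [Ex|nEx] := pselect (E x); [left|right; right].
rewrite ler_norml; apply/andP; split; lra.
Qed.

Lemma pr_symdiff_triangle E F C : measurable E -> measurable F -> measurable C ->
  pr (symdiff E F) <= pr (symdiff C E) + pr (symdiff C F).
Proof.
move=> mE mF mC; apply: pr_subadd; try exact: measurable_symdiff.
by move=> x [[Ex nFx]|[Fx nEx]]; have [Cx|nCx] := pselect (C x);
  [right; left|left; right|left; left|right; right].
Qed.

(* [pr (E `\` F) = pr (F `\` E)] and
   [pr (E `&` F) >= pr (F `&` C) - e >= pr (E `&` C) - 2 e >= pr E - 3 e]. *)
Lemma pr_symdiff_le_approx E F C (e : R) :
  measurable E -> measurable F -> measurable C -> pr E = pr F ->
  pr (symdiff C E) <= e -> pr (E `&` C) <= pr (F `&` C) + e ->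
  pr (symdiff E F) <= 6 * e.
Proof.
move=> mE mF mC EF CE ECF.
have mCE := measurable_symdiff mC mE.
have EFd : pr (symdiff E F) <= pr (E `\` F) + pr (F `\` E).
  by apply: pr_subadd => //; [exact: measurable_symdiff|exact: measurableD|exact: measurableD].
rewrite pr_setD// [in X in _ <= _ + X]pr_setD// [F `&` E]setIC in EFd.
have FC : pr (F `&` C) <= pr (E `&` F) + pr (symdiff C E).
  apply: pr_subadd => //; [exact: measurableI|exact: measurableI|].
  by move=> x [Fx Cx]; have [Ex|nEx] := pselect (E x); [left|right; left].
have EC : pr E <= pr (E `&` C) + pr (symdiff C E).
  apply: pr_subadd => //; [exact: measurableI|].
  by move=> x Ex; have [Cx|nCx] := pselect (C x); [left|right; right].
lra.
Qed.

Section InvertibleMpt.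
Variable Q : X -> X.
Hypothesis hQ : inv_mpt mu Q.

Lemma inv_mpt_imageE : exists2 Qi : X -> X, measurable_fun setT Qi &
  forall B, Q @` B = Qi @^-1` B.
Proof.
case: hQ => _ _ [Qi [QK QiK mQi]]; exists Qi => // B.
apply/seteqP; split => x /=; first by case=> b Bb <-; rewrite QK.
by move=> Bx; exists (Qi x); rewrite ?QiK.
Qed.

Lemma measurable_image B : measurable B -> measurable (Q @` B).
Proof.
by move=> mB; have [Qi mQi ->] := inv_mpt_imageE; rewrite -[_ @^-1` _]setTI; exact: mQi.
Qed.

Lemma measurable_preimage B : measurable B -> measurable (Q @^-1` B).
Proof. by case: hQ => mQ _ _ mB; rewrite -[_ @^-1` _]setTI; exact: mQ. Qed.

Lemma preimage_image B : Q @^-1` (Q @` B) = B.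
Proof.
case: hQ => _ _ [Qi [QK _ _]]; apply/seteqP; split => x /=; last by exists x.
by case=> b Bb /(congr1 Qi); rewrite !QK => <-.
Qed.

Lemma image_preimageI B C : Q @` (Q @^-1` B `&` C) = B `&` Q @` C.
Proof.
apply/seteqP; split => x /=; first by case=> y [By Cy] <-; split => //; exists y.
by move=> [Bx [y Cy yx]]; exists y; rewrite ?yx.
Qed.

Lemma pr_preimage B : measurable B -> pr (Q @^-1` B) = pr B.
Proof. by case: hQ => _ mQ _ mB; rewrite mQ. Qed.

Lemma pr_image B : measurable B -> pr (Q @` B) = pr B.
Proof. by move=> mB; rewrite -pr_preimage ?preimage_image//; exact: measurable_image. Qed.

End InvertibleMpt.
End FiniteMeasure.

Section Distances.
Context d (X : measurableType d) (R : realType) (mu : probability X R).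
Local Notation pr B := (fine (mu B)).
Variable A : nat -> set X.
Hypothesis mA : forall i, measurable (A i).

Lemma pr_le1 B : measurable B -> pr B <= 1.
Proof. by move=> mB; rewrite -lee_fin -pr_measureE// probability_le1. Qed.

Definition a_coef (Q P : X -> X) i j :=
  `|pr (Q @` A i `&` A j) - pr (P @` A i `&` A j)|.

Definition d_coef (Q P : X -> X) i :=
  pr (symdiff (Q @` A i) (P @` A i)) + pr (symdiff (Q @^-1` A i) (P @^-1` A i)).

Lemma measurable_image_setI (S : X -> X) i j :
  inv_mpt mu S -> measurable (S @` A i `&` A j).
Proof. by move=> hS; have mSA := measurable_image hS (mA i); exact: measurableI. Qed.

Local Open Scope ereal_scope.

Lemma dist_d_ge0 Q P : 0 <= dist_d mu A Q P.
Proof. by apply: nneseries_ge0 => i _ _; rewrite mule_ge0 ?pow2N_ge0// adde_ge0. Qed.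

Lemma dist_a_ge0 Q P : 0 <= dist_a mu A Q P.
Proof.
apply: nneseries_ge0 => i _ _; apply: nneseries_ge0 => j _ _.
by rewrite mule_ge0 ?pow2N_ge0.
Qed.

Section TwoMaps.
Variables Q P : X -> X.
Hypotheses (hQ : inv_mpt mu Q) (hP : inv_mpt mu P).

Lemma a_coef_ge0 i j : (0 <= a_coef Q P i j)%R.
Proof. exact: normr_ge0. Qed.

Lemma d_coef_ge0 i : (0 <= d_coef Q P i)%R.
Proof. by rewrite addr_ge0// pr_ge0. Qed.

Lemma dist_dE : dist_d mu A Q P = \sum_(i <oo) ((2 ^- i)%:E * (d_coef Q P i)%:E).
Proof.
apply: eq_eseriesr => i _; rewrite EFinD -!pr_measureE//.
  exact: measurable_symdiff (measurable_preimage hQ (mA i)) (measurable_preimage hP (mA i)).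
exact: measurable_symdiff (measurable_image hQ (mA i)) (measurable_image hP (mA i)).
Qed.

Lemma dist_aE : dist_a mu A Q P =
  \sum_(i <oo) ((2 ^- i)%:E * \sum_(j <oo) ((2 ^- j)%:E * (a_coef Q P i j)%:E)).
Proof.
apply: eq_eseriesr => i _; rewrite -nneseriesZl => [|j _]; last first.
  by rewrite mule_ge0 ?pow2N_ge0 ?lee_fin ?a_coef_ge0.
apply: eq_eseriesr => j _; rewrite -abse_EFin EFinB exprD invfM EFinM muleA.
by rewrite -!pr_measureE//; exact: measurable_image_setI.
Qed.

Lemma a_coef_le1 i j : (a_coef Q P i j <= 1)%R.
Proof.
have := pr_le1 (measurable_image_setI i j hQ).
have := pr_le1 (measurable_image_setI i j hP).
have := pr_ge0 mu (Q @` A i `&` A j); have := pr_ge0 mu (P @` A i `&` A j).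
rewrite /a_coef ler_norml; set x := pr _; set y := pr _ => *; apply/andP; split; lra.
Qed.

Lemma d_coef_le2 i : (d_coef Q P i <= 2)%R.
Proof.
have := pr_le1 (measurable_symdiff (measurable_image hQ (mA i)) (measurable_image hP (mA i))).
have := pr_le1 (measurable_symdiff (measurable_preimage hQ (mA i)) (measurable_preimage hP (mA i))).
rewrite /d_coef; lra.
Qed.

Lemma a_coef_le_d_coef i j : (a_coef Q P i j <= d_coef Q P i)%R.
Proof.
apply: le_trans (pr_setI_dist _ (measurable_image hQ (mA i)) (measurable_image hP (mA i)) (mA j)) _.
by rewrite lerDl pr_ge0.
Qed.

Lemma dist_d_le4 : dist_d mu A Q P <= 4%:E.
Proof.
rewrite dist_dE; apply: le_trans (dyadic_series_le_const (c := 2) _ _) _.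
- by move=> i; rewrite lee_fin d_coef_ge0.
- by move=> i; rewrite lee_fin d_coef_le2.
- by rewrite lee_fin; lra.
Qed.

Lemma dist_a_le2d : dist_a mu A Q P <= 2%:E * dist_d mu A Q P.
Proof.
rewrite dist_aE dist_dE -nneseriesZl => [|i _]; last first.
  by rewrite mule_ge0 ?pow2N_ge0 ?lee_fin ?d_coef_ge0.
apply: lee_nneseries => [i _ _|i _].
  rewrite mule_ge0 ?pow2N_ge0//; apply: nneseries_ge0 => j _ _.
  by rewrite mule_ge0 ?pow2N_ge0 ?lee_fin ?a_coef_ge0.
rewrite muleCA lee_wpmul2l ?pow2N_ge0// -EFinM.
apply: dyadic_series_le_const => j; first by rewrite lee_fin a_coef_ge0.
by rewrite lee_fin a_coef_le_d_coef.
Qed.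

Lemma a_coef_le_dist_a i j :
  ((2 ^- i * 2 ^- j * a_coef Q P i j)%:E <= dist_a mu A Q P).
Proof.
have t0 k l : 0 <= (2 ^- l)%:E * (a_coef Q P k l)%:E.
  by rewrite mule_ge0 ?pow2N_ge0 ?lee_fin ?a_coef_ge0.
rewrite dist_aE; apply: le_trans (nneseries_term_le i _); last first.
  by move=> k; rewrite mule_ge0 ?pow2N_ge0//; apply: nneseries_ge0 => *.
by rewrite -mulrA !EFinM lee_wpmul2l ?pow2N_ge0// nneseries_term_le.
Qed.

End TwoMaps.

Lemma dist_d_triangle Q P Q' : inv_mpt mu Q -> inv_mpt mu P -> inv_mpt mu Q' ->
  dist_d mu A Q P <= dist_d mu A Q' Q + dist_d mu A Q' P.
Proof.
move=> hQ hP hQ'.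
have t0 (S S' : X -> X) i : 0 <= (2 ^- i)%:E * (d_coef S S' i)%:E.
  by rewrite mule_ge0 ?pow2N_ge0 ?lee_fin ?d_coef_ge0.
rewrite !dist_dE// -nneseriesD => [|i _ _|i _ _]; [|exact: t0|exact: t0].
apply: lee_nneseries => [i _ _|i _]; first exact: t0.
rewrite -!EFinM -EFinD lee_fin -mulrDr ler_wpM2l ?(ltW (pow2N_gt0 _ _))//.
have mim (S : X -> X) : inv_mpt mu S -> measurable (S @` A i).
  by move=> hS; have := measurable_image hS (mA i).
have mpre (S : X -> X) : inv_mpt mu S -> measurable (S @^-1` A i).
  by move=> hS; have := measurable_preimage hS (mA i).
have := pr_symdiff_triangle mu (mim _ hQ) (mim _ hP) (mim _ hQ').
have := pr_symdiff_triangle mu (mpre _ hQ) (mpre _ hP) (mpre _ hQ').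
rewrite /d_coef; lra.
Qed.

Lemma dist_a_triangle Q P Q' : inv_mpt mu Q -> inv_mpt mu P -> inv_mpt mu Q' ->
  dist_a mu A Q P <= dist_a mu A Q Q' + dist_a mu A Q' P.
Proof.
move=> hQ hP hQ'; rewrite !dist_aE//.
have t0 (S S' : X -> X) i j : 0 <= (2 ^- j)%:E * (a_coef S S' i j)%:E.
  by rewrite mule_ge0 ?pow2N_ge0 ?lee_fin ?a_coef_ge0.
have s0 (S S' : X -> X) i : 0 <= (2 ^- i)%:E * \sum_(j <oo) ((2 ^- j)%:E * (a_coef S S' i j)%:E).
  by rewrite mule_ge0 ?pow2N_ge0//; apply: nneseries_ge0 => *.
rewrite -nneseriesD => [|i _ _|i _ _]; [|exact: s0|exact: s0].
apply: lee_nneseries => [i _ _|i _]; first exact: s0.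
rewrite -ge0_muleDr ?lee_wpmul2l ?pow2N_ge0//; try by apply: nneseries_ge0 => *.
rewrite -nneseriesD => [|j _ _|j _ _]; [|exact: t0|exact: t0].
apply: lee_nneseries => [j _ _|j _]; first exact: t0.
rewrite -!EFinM -EFinD lee_fin -mulrDr ler_wpM2l ?(ltW (pow2N_gt0 _ _))//.
exact: ler_distD.
Qed.

Hypothesis A_dense : forall B, measurable B -> forall e : R, (0 < e)%R ->
  exists i, mu (symdiff (A i) B) < e%:E.

Lemma exists_A_approx B (e : R) : measurable B -> (0 < e)%R ->
  exists j, (pr (symdiff (A j) B) <= e)%R.
Proof.
move=> mB e0; have [j hj] := A_dense mB e0; exists j.
by rewrite -lee_fin -pr_measureE ?ltW//; exact: measurable_symdiff.
Qed.

(* The preimage part reduces to [a_coef Q P k i] because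
   [Q @` (Q @^-1` A i `&` A k) = A i `&` Q @` A k]. *)
Lemma d_coef_le_a_coef Q P i j k (e : R) : inv_mpt mu Q -> inv_mpt mu P ->
  (pr (symdiff (A j) (Q @` A i)) <= e)%R ->
  (pr (symdiff (A k) (Q @^-1` A i)) <= e)%R ->
  (a_coef Q P i j <= e)%R -> (a_coef Q P k i <= e)%R ->
  (d_coef Q P i <= 12 * e)%R.
Proof.
move=> hQ hP Qj Qk aij aki.
have mQi := measurable_image hQ (mA i); have mPi := measurable_image hP (mA i).
have mQi' := measurable_preimage hQ (mA i); have mPi' := measurable_preimage hP (mA i).
have im : (pr (symdiff (Q @` A i) (P @` A i)) <= 6 * e)%R.
  apply: (pr_symdiff_le_approx mQi mPi (mA j)) => //; first by rewrite !pr_image.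
  by move: aij; rewrite /a_coef => /ler_normlP[_]; lra.
have pre : (pr (symdiff (Q @^-1` A i) (P @^-1` A i)) <= 6 * e)%R.
  apply: (pr_symdiff_le_approx mQi' mPi' (mA k)) => //; first by rewrite !pr_preimage.
  have mIk (S : X -> X) : inv_mpt mu S -> measurable (S @^-1` A i `&` A k).
    by move=> hS; have mSi := measurable_preimage hS (mA i); exact: measurableI.
  rewrite -(pr_image hQ (mIk _ hQ)) -(pr_image hP (mIk _ hP)) !image_preimageI.
  by rewrite ![A i `&` _]setIC; move: aki; rewrite /a_coef => /ler_normlP[_]; lra.
by rewrite /d_coef; lra.
Qed.

Lemma dist_d_small_of_dist_a Q (eta : R) : inv_mpt mu Q -> (0 < eta)%R ->
  exists2 dl : R, (0 < dl)%R & forall P, inv_mpt mu P ->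
    dist_a mu A Q P < dl%:E -> dist_d mu A Q P < eta%:E.
Proof.
move=> hQ eta0; pose e := (eta / 48)%R.
have e0 : (0 < e)%R by rewrite divr_gt0.
have [N hN] : exists N, (2 ^- N <= eta / 16)%R by apply: exists_pow2N_le; rewrite divr_gt0.
have /choice [jf hj] i : exists j, (pr (symdiff (A j) (Q @` A i)) <= e)%R.
  by apply: exists_A_approx e0; have := measurable_image hQ (mA i).
have /choice [kf hk] i : exists k, (pr (symdiff (A k) (Q @^-1` A i)) <= e)%R.
  by apply: exists_A_approx e0; have := measurable_preimage hQ (mA i).
have [dl dl0 hdl] := @exists_pos_lbound R N
  (fun i => Num.min (2 ^- i * 2 ^- jf i * e) (2 ^- kf i * 2 ^- i * e))%R
  ltac:(by move=> i; rewrite lt_min !mulr_gt0 ?pow2N_gt0).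
exists dl => // P hP aQP.
have a_small a b : (dl <= 2 ^- a * 2 ^- b * e)%R -> (a_coef Q P a b <= e)%R.
  move=> hab; have := le_lt_trans (a_coef_le_dist_a hQ hP a b) aQP.
  by rewrite lte_fin => /lt_le_trans/(_ hab); rewrite ltr_pM2l ?mulr_gt0 ?pow2N_gt0// => /ltW.
rewrite dist_dE//; apply: le_lt_trans (@dyadic_series_le R 2 (12 * e) N _ _ _ _ _ _) _.
- by [].
- by rewrite mulr_ge0// ltW.
- by move=> i; rewrite lee_fin d_coef_ge0.
- by move=> i; rewrite lee_fin d_coef_le2.
- move=> i iN; rewrite lee_fin; move: (hdl i iN); rewrite le_min => /andP[hi hk'].
  exact: d_coef_le_a_coef (hj i) (hk i) (a_small _ _ hi) (a_small _ _ hk').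
- by rewrite lte_fin /e; lra.
Qed.

Section Action.
Variables (G : topologicalType) (T : G -> X -> X).
Hypothesis T_mpt : forall g, inv_mpt mu (T g).
Hypothesis T_cont : forall B C, measurable B -> measurable C ->
  continuous (fun g => fine (mu (T g @` B `&` C))).

Lemma near_dist_a_action g0 (dl : R) : (0 < dl)%R ->
  \forall g \near g0, dist_a mu A (T g0) (T g) < dl%:E.
Proof.
move=> dl0; pose e := (dl / 8)%R; have e0 : (0 < e)%R by rewrite divr_gt0.
have [N hN] : exists N, (2 ^- N <= dl / 32)%R by apply: exists_pow2N_le; rewrite divr_gt0.
have : \forall g \near g0, forall ij : 'I_N * 'I_N,
    (a_coef (T g0) (T g) ij.1 ij.2 <= e)%R.
  apply: filter_forall => -[i j] /=.
  have := @T_cont _ _ (mA i) (mA j) g0 => /cvgr_dist_lt /(_ _ e0).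
  by apply: filterS => g /ltW.
apply: filterS => g near_g; rewrite dist_aE//.
pose s i := \sum_(j <oo) ((2 ^- j)%:E * (a_coef (T g0) (T g) i j)%:E).
have a_ge0 i j : 0 <= (a_coef (T g0) (T g) i j)%:E by rewrite lee_fin a_coef_ge0.
have a_le1 i j : (a_coef (T g0) (T g) i j)%:E <= 1%:E.
  by rewrite lee_fin a_coef_le1.
have s_ge0 i : 0 <= s i by apply: nneseries_ge0 => j _ _; rewrite mule_ge0 ?pow2N_ge0.
have s_le2 i : s i <= 2%:E by rewrite -[2%R]mulr1; exact: dyadic_series_le_const.
have s_small i : (i < N)%N -> s i <= (2 * e + 2 * 1 * 2 ^- N)%:E.
  move=> iN; apply: dyadic_series_le => // [|j jN]; first exact: ltW.
  by rewrite lee_fin (near_g (Ordinal iN, Ordinal jN)).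
apply: le_lt_trans (dyadic_series_le (c := 2) (N := N) _ _ s_ge0 s_le2 s_small) _ => //.
- by rewrite addr_ge0// ?mulr_ge0// ltW// ?pow2N_gt0.
- by rewrite lte_fin /e; have := pow2N_gt0 R N; lra.
Qed.

(* Near each [g0] of [K], [dist_d_small_of_dist_a] at [T g0] transfers to [T g]
   with threshold [2 ^- n] for all large [n]; compactness makes [n] uniform. *)
Lemma dist_d_small_of_dist_a_compact (K : set G) (eta : R) : compact K -> (0 < eta)%R ->
  exists2 dl : R, (0 < dl)%R & forall g, K g -> forall Q, inv_mpt mu Q ->
    dist_a mu A (T g) Q < dl%:E -> dist_d mu A (T g) Q < eta%:E.
Proof.
move=> /compact_near_coveringP cK eta0; have eta2 : (0 < eta / 2)%R by rewrite divr_gt0.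
pose P n g := forall Q, inv_mpt mu Q ->
  dist_a mu A (T g) Q < (2 ^- n)%:E -> dist_d mu A (T g) Q < eta%:E.
suff [n _ Kn] : \forall n \near \oo, K `<=` P n.
  by exists (2 ^- n)%R; [exact: pow2N_gt0|exact: Kn n (leqnn n)].
apply: cK => g0 _; have [d0 d00 hd0] := dist_d_small_of_dist_a (T_mpt g0) eta2.
have [n0 hn0] := @exists_pow2N_le R (d0 / 2) ltac:(by rewrite divr_gt0).
exists ([set g | dist_a mu A (T g0) (T g) < (d0 / 2)%:E], [set n | (n0 <= n)%N]).
  by split; [apply: near_dist_a_action; rewrite divr_gt0|exists n0].
move=> [g n] /= [g0g n0n] Q hQ aQ.
have dT : dist_d mu A (T g0) (T g) < (eta / 2)%:E.
  by apply: hd0 (T_mpt g) (lt_trans g0g _); rewrite lte_fin ltr_pdivrMr// ltr_pMr// ltr1n.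
have dQ : dist_d mu A (T g0) Q < (eta / 2)%:E.
  apply: hd0 hQ (le_lt_trans (dist_a_triangle (T_mpt g0) hQ (T_mpt g)) _).
  rewrite (splitr d0) EFinD lteD// (lt_le_trans aQ)// lee_fin.
  exact: le_trans (pow2N_le R n0n) hn0.
apply: le_lt_trans (dist_d_triangle (T_mpt g) hQ (T_mpt g0)) _.
by rewrite (splitr eta) EFinD lteD.
Qed.

End Action.

Section CompactFamily.
Variables (G : topologicalType) (I : set nat) (K : nat -> set G).
Hypothesis K_compact : forall i, I i -> compact (K i).
Hypothesis K_nonempty : forall i, I i -> K i !=set0.

Local Notation sup_d T S i := (ereal_sup [set dist_d mu A (T g) (S g) | g in K i]).
Local Notation sup_a T S i := (ereal_sup [set dist_a mu A (T g) (S g) | g in K i]).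

Lemma dist_dG_ge0 (T S : G -> X -> X) : 0 <= dist_dG mu A I K T S.
Proof.
apply: nneseries_ge0 => i _ /set_mem Ii; rewrite mule_ge0 ?pow2N_ge0//.
by apply: ereal_sup_image_ge0 (K_nonempty Ii) _ => g; exact: dist_d_ge0.
Qed.

Lemma dist_aG_ge0 (T S : G -> X -> X) : 0 <= dist_aG mu A I K T S.
Proof.
apply: nneseries_ge0 => i _ /set_mem Ii; rewrite mule_ge0 ?pow2N_ge0//.
by apply: ereal_sup_image_ge0 (K_nonempty Ii) _ => g; exact: dist_a_ge0.
Qed.

Section TwoActions.
Variables T S : G -> X -> X.
Hypotheses (T_mpt : forall g, inv_mpt mu (T g)) (S_mpt : forall g, inv_mpt mu (S g)).

Lemma dist_aG_le2dG : dist_aG mu A I K T S <= 2%:E * dist_dG mu A I K T S.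
Proof.
rewrite /dist_aG /dist_dG -nneseriesZl => [|i /set_mem Ii]; last first.
  rewrite mule_ge0 ?pow2N_ge0//.
  by apply: ereal_sup_image_ge0 (K_nonempty Ii) _ => g; exact: dist_d_ge0.
apply: lee_nneseries => [i _ /set_mem Ii|i _].
  rewrite mule_ge0 ?pow2N_ge0//.
  by apply: ereal_sup_image_ge0 (K_nonempty Ii) _ => g; exact: dist_a_ge0.
rewrite muleCA lee_wpmul2l ?pow2N_ge0//; apply: ge_ereal_sup => _ [g Kg <-].
apply: le_trans (dist_a_le2d (T_mpt g) (S_mpt g)) _.
by rewrite lee_wpmul2l//; apply: ereal_sup_ubound; exists g.
Qed.

Lemma sup_a_le_dist_aG i : I i -> (2 ^- i)%:E * sup_a T S i <= dist_aG mu A I K T S.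
Proof.
move=> Ii; pose f k := if k \in I then (2 ^- k)%:E * sup_a T S k else 0.
have f0 k : 0 <= f k.
  rewrite /f; case: ifPn => // /set_mem Ik; rewrite mule_ge0 ?pow2N_ge0//.
  by apply: ereal_sup_image_ge0 (K_nonempty Ik) _ => g; exact: dist_a_ge0.
by rewrite /dist_aG eseries_mkcond; have := nneseries_term_le i f0; rewrite /f (mem_set Ii).
Qed.

End TwoActions.

Lemma dist_dG_small_of_dist_aG (T : G -> X -> X) (eta : R) :
  (forall g, inv_mpt mu (T g)) ->
  (forall B C, measurable B -> measurable C ->
    continuous (fun g => fine (mu (T g @` B `&` C)))) ->
  (0 < eta)%R ->
  exists2 dl : R, (0 < dl)%R & forall S, (forall g, inv_mpt mu (S g)) ->
    dist_aG mu A I K T S < dl%:E -> dist_dG mu A I K T S <= eta%:E.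
Proof.
move=> T_mpt T_cont eta0; pose e := (eta / 4)%R; have e0 : (0 < e)%R by rewrite divr_gt0.
have [N hN] : exists N, (2 ^- N <= eta / 16)%R by apply: exists_pow2N_le; rewrite divr_gt0.
have /choice [df hdf] i : exists dl : R, (0 < dl)%R /\ (I i -> forall g, K i g ->
    forall Q, inv_mpt mu Q -> dist_a mu A (T g) Q < dl%:E -> dist_d mu A (T g) Q < e%:E).
  have [Ii|nIi] := pselect (I i); last by exists 1%R; split => // /nIi.
  have [dl dl0 hdl] := dist_d_small_of_dist_a_compact T_mpt T_cont (K_compact Ii) e0.
  by exists dl.
have [dl dl0 hdl] := @exists_pos_lbound R N (fun i => 2 ^- i * df i)%R
  ltac:(by move=> i; rewrite mulr_gt0 ?pow2N_gt0//; case: (hdf i)).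
exists dl => // S S_mpt aTS.
have sup_d_small i : I i -> (i < N)%N -> sup_d T S i <= e%:E.
  move=> Ii iN; have [_ hdfi] := hdf i.
  have : (2 ^- i)%:E * sup_a T S i < (2 ^- i * df i)%:E.
    by apply: le_lt_trans (sup_a_le_dist_aG T S Ii) (lt_le_trans aTS _); rewrite lee_fin hdl.
  rewrite EFinM lte_pmul2l ?lte_fin ?pow2N_gt0// => sup_lt.
  apply: ge_ereal_sup => _ [g Kg <-]; apply/ltW/(hdfi Ii g Kg _ (S_mpt g)).
  by apply: le_lt_trans sup_lt; apply: ereal_sup_ubound; exists g.
rewrite /dist_dG eseries_mkcond.
have -> : \sum_(0 <= i <oo) (if i \in I then (2 ^- i)%:E * sup_d T S i else 0) =
    \sum_(i <oo) ((2 ^- i)%:E * (if i \in I then sup_d T S i else 0)).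
  by apply: eq_eseriesr => i _; case: ifP; rewrite ?mule0.
apply: le_trans (@dyadic_series_le R 4 e N _ _ _ _ _ _) _ => //.
- exact: ltW.
- move=> i; case: ifPn => // /set_mem Ii.
  by apply: ereal_sup_image_ge0 (K_nonempty Ii) _ => g; exact: dist_d_ge0.
- move=> i; case: ifPn => // _; apply: ge_ereal_sup => _ [g _ <-].
  exact: dist_d_le4 (T_mpt g) (S_mpt g).
- by move=> i iN; case: ifPn => [/set_mem Ii|_]; [exact: sup_d_small|rewrite lee_fin ltW].
- by rewrite lee_fin /e; lra.
Qed.

Variable mul : G -> G -> G.
Variable Gam : set G.
Hypothesis Gam_nonempty : Gam !=set0.

Local Notation M := (mixing_actions mu mul Gam).

Lemma sup_a_Gam_ge0 (T S : G -> X -> X) : 0 <= sup_a_Gam mu A Gam T S.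
Proof. by apply: ereal_sup_image_ge0 => // g; exact: dist_a_ge0. Qed.

Lemma metric_w_small_of_leash_m T : M T -> forall e : R, (0 < e)%R ->
  exists2 dl : R, (0 < dl)%R & forall S, M S ->
    leash_m mu A I K Gam T S < dl%:E -> metric_w mu A I K Gam T S < e%:E.
Proof.
move=> [[T_mpt _ _] _] e e0; exists (e / 2)%R; first by rewrite divr_gt0.
move=> S [[S_mpt _ _] _] mTS; apply: (@le_lt_trans _ _ (2%:E * leash_m mu A I K Gam T S)).
  rewrite /metric_w /leash_m ge0_muleDr ?dist_dG_ge0 ?sup_a_Gam_ge0//.
  rewrite leeD ?dist_aG_le2dG// -[leLHS]mul1e lee_wpmul2r ?sup_a_Gam_ge0//.
  by rewrite lee_fin ler1n.
have -> : e = (2 * (e / 2))%R by rewrite mulrC divfK.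
by rewrite EFinM lte_pmul2l.
Qed.

Lemma leash_m_small_of_metric_w T : M T -> forall e : R, (0 < e)%R ->
  exists2 dl : R, (0 < dl)%R & forall S, M S ->
    metric_w mu A I K Gam T S < dl%:E -> leash_m mu A I K Gam T S < e%:E.
Proof.
move=> [[T_mpt _ T_cont] _] e e0; have e4 : (0 < e / 4)%R by rewrite divr_gt0.
have [dl dl0 hdl] := dist_dG_small_of_dist_aG T_mpt T_cont e4.
exists (Num.min dl (e / 2))%R; first by rewrite lt_min dl0 divr_gt0.
move=> S [[S_mpt _ _] _] wTS.
have aG_le_w : dist_aG mu A I K T S <= metric_w mu A I K Gam T S.
  by rewrite leeDl// sup_a_Gam_ge0.
have s_le_w : sup_a_Gam mu A Gam T S <= metric_w mu A I K Gam T S.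
  by rewrite leeDr// dist_aG_ge0.
have aG_lt : dist_aG mu A I K T S < dl%:E.
  by apply: le_lt_trans aG_le_w (lt_le_trans wTS _); rewrite lee_fin ge_min lexx.
have s_lt : sup_a_Gam mu A Gam T S < (e / 2)%:E.
  by apply: le_lt_trans s_le_w (lt_le_trans wTS _); rewrite lee_fin ge_min lexx orbT.
apply: le_lt_trans (leeD (hdl S S_mpt aG_lt) (lexx _)) _.
apply: (@lt_le_trans _ _ ((e / 4)%:E + (e / 2)%:E)); first by rewrite lteD2lE.
by rewrite -EFinD lee_fin; lra.
Qed.

End CompactFamily.
End Distances.

Theorem mainTheorem9
  (d : measure_display) (X : measurableType d) (R : realType)
  (mu : probability X R)
  (A : nat -> set X)
  (G : topologicalType) (mul : G -> G -> G) (inv : G -> G) (one : G)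
  (I : set nat) (K : nat -> set G) (Gam : set G) :
  nonatomic_lebesgue_space mu ->
  nonatomic mu ->
  (forall i, measurable (A i)) ->
  <<s range A>> = @measurable d X ->
  (forall B, measurable B -> forall eps : R, 0 < eps ->
     exists i, (mu (symdiff (A i) B) < eps%:E)%E) ->
  lc_group mul inv one ->
  (forall i, I i -> compact (K i) /\ (interior (K i) !=set0)) ->
  (exists S0, S0 `<=` \bigcup_(i in I) K i /\ generates mul inv one S0) ->
  unbounded Gam ->
  forall U : set (G -> X -> X),
    metric_open (mixing_actions mu mul Gam) (metric_w mu A I K Gam) U <->
    metric_open (mixing_actions mu mul Gam) (leash_m mu A I K Gam) U.
Proof.
move=> _ _ mA _ A_dense _ hK _ /unbounded_neq0 Gam0 U.
have K_compact i : I i -> compact (K i) by case/hK.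
have K_nonempty i : I i -> K i !=set0.
  by case/hK => _ [g /interior_subset Kg]; exists g.
split; apply: metric_open_compare => T MT.
- exact (metric_w_small_of_leash_m mA K_nonempty Gam0 MT).
- exact (leash_m_small_of_metric_w mA A_dense K_compact K_nonempty Gam0 MT).
Qed.
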